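(* Let $m\in\mathbb{N}$, $m\geq2$, and $T:[0,1)\to[0,1)$, $T(x)=mx\bmod 1$. Let $0\le a<b\le 1$ so that $(a,b)\subset[0,1)$ is a nonempty open interval (the hole), and let $$A=\{x\in[0,1): T^n(x)\notin(a,b)\text{ for all }n\geq 0\}$$ be the survival set. Then for every $t\in(0,1)$ that has a universal $m$-adic expansion, $$A-t\subset\mathbb{Q}^c,\qquad A+t\subset\mathbb{Q}^c,\qquad \frac{A}{t}\subset\mathbb{Q}^c.$$ Moreover, if $t\in(1,\infty)$ and $1/t$ has a universal $m$-adic expansion, then $tA\subset\mathbb{Q}^c$.
   Context: An $m$-adic expansion of $t\in(0,1)$ is a sequence $(t_k)\in\{0,1,\dots,m-1\}^{\mathbb{N}}$ with $t=\sum_{k\geq1}t_k m^{-k}$. Such an expansion is universal if for every $k\geq1$ and every word $x_1\cdots x_k\in\{0,\dots,m-1\}^k$ there is $k_0\in\mathbb{N}$ with $t_{k_0+1}\cdots t_{k_0+k}=x_1\cdots x_k$; $t$ has a universal $m$-adic expansion if some $m$-adic expansion of it is universal. Notation: $A\pm t=\{x\pm t:x\in A\}$, $tA=\{tx:x\in A\setminus\{0\}\}$, $\frac{A}{t}=\{t^{-1}x:x\in A\setminus\{0\}\}$. $\mathbb{Q}^c$ denotes the set of irrational real numbers. *)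

From Stdlib Require Import Reals Lra Lia List.
Open Scope R_scope.

Definition frac (x : R) : R := x - IZR (Int_part x).

Definition Tmap (m : nat) (x : R) : R := frac (INR m * x).

(* d is an m-adic expansion of t: digits d k = t_{k+1} in {0..m-1} and
   t = sum_{k>=0} d k / m^(k+1) *)
Definition madic_expansion (m : nat) (d : nat -> nat) (t : R) : Prop :=
  (forall k, (d k < m)%nat) /\
  infinite_sum (fun k => INR (d k) / INR m ^ (S k)) t.

Definition universal_seq (m : nat) (d : nat -> nat) : Prop :=
  forall w : list nat, (1 <= length w)%nat -> Forall (fun x => (x < m)%nat) w ->
    exists k0 : nat, forall i : nat, (i < length w)%nat -> d (k0 + i)%nat = nth i w 0%nat.

Definition has_universal_expansion (m : nat) (t : R) : Prop :=
  exists d, madic_expansion m d t /\ universal_seq m d.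

Definition rational (x : R) : Prop :=
  exists p q : Z, q <> 0%Z /\ x = IZR p / IZR q.

Definition irrational (x : R) : Prop := ~ rational x.

Definition survivor (m : nat) (a b : R) (x : R) : Prop :=
  0 <= x < 1 /\ forall n : nat, ~ (a < Nat.iter n (Tmap m) x < b).

From Stdlib Require Import Reals Lra Lia ZArith List.
Open Scope R_scope.

(* Let [x] survive the hole [(a,b)] and suppose [x] lies on a
   rational line through [u], i.e. [x = p1/q + (p2/q) u] with [p2 <> 0], where
   [u] has a universal [m]-adic expansion [d].  Write [m^n u = Nn n + s_n],
   where [Nn n] is the integer formed by the first [n] digits and [s_n] in
   [0,1] the tail.  Then [T^n x = frac ((p1 m^n + p2 Nn n + p2 s_n) / q)]
   depends only on the residues of [(m^n, Nn n)] modulo [q] and on [s_n].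
   From any residue state a word of digits steers the orbit into the hole:
   a first block adjusts the residue of the integer part, a second block puts
   the tail in a fine cylinder ([lands_from_any_state]).  As there are only
   finitely many states, concatenating such words gives one word which steers
   every state into the hole ([synchronizing_word], an abstract fact about
   deterministic automata).  This word occurs in [d] by universality, hence
   the orbit of [x] meets [(a,b)] ([orbit_hits_hole]), a contradiction.  The
   four irrationality claims are the lines [x = r + t], [x = r - t],
   [x = r t] and [x = r / t] ([survivor_off_rational_lines]). *)

Lemma Int_part_unique (r : R) (z : Z) : IZR z <= r < IZR z + 1 -> Int_part r = z.
Proof.
  intros [H1 H2]. unfold Int_part.
  assert (Hup : up r = (z + 1)%Z) by (symmetry; apply tech_up; rewrite plus_IZR; simpl; lra).
  rewrite Hup. lia.
Qed.

Lemma frac_bounds (r : R) : 0 <= frac r < 1.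
Proof. unfold frac. destruct (base_Int_part r). lra. Qed.

Lemma frac_shift (r : R) (k : Z) : frac (r + IZR k) = frac r.
Proof.
  unfold frac. destruct (base_Int_part r).
  rewrite (Int_part_unique (r + IZR k) (Int_part r + k)); rewrite ?plus_IZR; lra.
Qed.

Lemma frac_small (k : Z) (w : R) : 0 <= w < 1 -> frac (IZR k + w) = w.
Proof. intros H. unfold frac. rewrite (Int_part_unique (IZR k + w) k); lra. Qed.

Lemma frac_stable (y h v dl : R) :
  frac y = v -> Rabs h < dl -> 0 <= v - dl -> v + dl <= 1 ->
  v - dl < frac (y + h) < v + dl.
Proof.
  intros Hy Hh H0 H1. apply Rabs_def2 in Hh.
  replace (y + h) with (IZR (Int_part y) + (v + h)) by (rewrite <- Hy; unfold frac; ring).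
  rewrite frac_small; lra.
Qed.

Lemma iter_Tmap (m : nat) (x : R) (n : nat) : 0 <= x < 1 ->
  Nat.iter n (Tmap m) x = frac (INR m ^ n * x).
Proof.
  intros Hx. induction n as [|n IH]; simpl.
  - replace (1 * x) with (IZR 0 + x) by (simpl; ring). rewrite frac_small; auto.
  - rewrite IH. unfold Tmap, frac at 2.
    replace (INR m * (INR m ^ n * x - IZR (Int_part (INR m ^ n * x))))
      with (INR m * (INR m ^ n * x) + IZR (- (Z.of_nat m * Int_part (INR m ^ n * x))))
      by (rewrite opp_IZR, mult_IZR, <- INR_IZR_INZ; ring).
    rewrite frac_shift. f_equal. ring.
Qed.

Lemma infinite_sum_bounds (f : nat -> R) (t lo hi : R) (K0 : nat) :
  infinite_sum f t -> (forall K, (K0 <= K)%nat -> lo <= sum_f_R0 f K <= hi) ->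
  lo <= t <= hi.
Proof.
  intros Hs Hb. split.
  - destruct (Rle_or_lt lo t) as [H|H]; auto.
    destruct (Hs (lo - t)) as [N HN]; [lra|].
    specialize (HN (max N K0) ltac:(lia)). specialize (Hb (max N K0) ltac:(lia)).
    unfold R_dist in HN. apply Rabs_def2 in HN. lra.
  - destruct (Rle_or_lt t hi) as [H|H]; auto.
    destruct (Hs (t - hi)) as [N HN]; [lra|].
    specialize (HN (max N K0) ltac:(lia)). specialize (Hb (max N K0) ltac:(lia)).
    unfold R_dist in HN. apply Rabs_def2 in HN. lra.
Qed.

Section Digits.

Variable m : nat.

(* The value of a word read as a base-[m] numeral (most significant digit first). *)
Definition wval (w : list nat) : nat := fold_left (fun acc k => acc * m + k)%nat w 0%nat.

Lemma fold_wval (w : list nat) (acc : nat) :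
  fold_left (fun acc k => acc * m + k)%nat w acc = (acc * m ^ length w + wval w)%nat.
Proof.
  unfold wval. revert acc. induction w as [|k w IH]; intros acc; simpl.
  - lia.
  - rewrite (IH (acc * m + k)%nat), (IH k). nia.
Qed.

Lemma wval_cons (k : nat) (w : list nat) :
  wval (k :: w) = (k * m ^ length w + wval w)%nat.
Proof. unfold wval at 1. simpl. rewrite fold_wval. lia. Qed.

Lemma wval_app (w1 w2 : list nat) :
  wval (w1 ++ w2) = (wval w1 * m ^ length w2 + wval w2)%nat.
Proof. unfold wval at 1. rewrite fold_left_app, fold_wval. reflexivity. Qed.

Lemma wval_lt (w : list nat) : Forall (fun k => k < m)%nat w -> (wval w < m ^ length w)%nat.
Proof.
  induction 1 as [|k w Hk Hw IH].
  - unfold wval. simpl. lia.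
  - rewrite wval_cons. cbn [length Nat.pow].
    assert (Hk1 : ((k + 1) * m ^ length w <= m * m ^ length w)%nat)
      by (apply Nat.mul_le_mono_r; lia).
    lia.
Qed.

Variable d : nat -> nat.

Fixpoint Nn (n : nat) : nat :=
  match n with 0 => 0%nat | S n => (m * Nn n + d n)%nat end.

Definition prefix (n : nat) (w : list nat) : Prop :=
  forall i, (i < length w)%nat -> d (n + i)%nat = nth i w 0%nat.

Lemma prefix_app_l (n : nat) (w1 w2 : list nat) : prefix n (w1 ++ w2) -> prefix n w1.
Proof.
  intros H i Hi. rewrite H by (rewrite length_app; lia). apply app_nth1; auto.
Qed.

Lemma prefix_app_r (n : nat) (w1 w2 : list nat) :
  prefix n (w1 ++ w2) -> prefix (n + length w1) w2.
Proof.
  intros H i Hi. rewrite <- Nat.add_assoc, H by (rewrite length_app; lia).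
  rewrite app_nth2 by lia. f_equal. lia.
Qed.

Lemma Nn_prefix (n : nat) (w : list nat) :
  prefix n w -> Nn (n + length w) = (Nn n * m ^ length w + wval w)%nat.
Proof.
  revert n. induction w as [|k w IH]; intros n Hp; simpl.
  - rewrite Nat.add_0_r. unfold wval. simpl. lia.
  - replace (n + S (length w))%nat with (S n + length w)%nat by lia.
    rewrite IH, wval_cons.
    + pose proof (Hp 0%nat ltac:(simpl; lia)) as H0. rewrite Nat.add_0_r in H0.
      simpl in H0 |- *. rewrite H0. nia.
    + intros i Hi. replace (S n + i)%nat with (n + S i)%nat by lia.
      apply Hp. simpl. lia.
Qed.

Section Window.

Hypothesis d_digits : forall k, (d k < m)%nat.

Lemma Nn_window (n j : nat) :
  (Nn n * m ^ j <= Nn (n + j) < (Nn n + 1) * m ^ j)%nat.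
Proof.
  set (w := map d (seq n j)).
  assert (Hp : prefix n w).
  { intros i Hi. unfold w in *. rewrite length_map, length_seq in Hi.
    rewrite nth_indep with (d' := d 0%nat) by (rewrite length_map, length_seq; lia).
    rewrite map_nth, seq_nth; auto. }
  assert (Hl : length w = j) by (unfold w; rewrite length_map, length_seq; auto).
  assert (Hd : Forall (fun k => k < m)%nat w).
  { apply Forall_forall. intros k Hk. unfold w in Hk. apply in_map_iff in Hk.
    destruct Hk as [i [<- _]]. auto. }
  pose proof (Nn_prefix n w Hp) as HN. pose proof (wval_lt w Hd) as Hv.
  rewrite Hl in HN, Hv. lia.
Qed.

End Window.

Fixpoint enc (L X : nat) : list nat :=
  match L with 0 => nil | S L => enc L (X / m) ++ (X mod m)%nat :: nil end.

Lemma enc_length (L X : nat) : length (enc L X) = L.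
Proof.
  revert X. induction L as [|L IH]; intros X; simpl; auto.
  rewrite length_app, IH. simpl. lia.
Qed.

Hypothesis m_pos : (1 <= m)%nat.

Lemma enc_digits (L X : nat) : Forall (fun k => k < m)%nat (enc L X).
Proof.
  revert X. induction L as [|L IH]; intros X; simpl; auto.
  apply Forall_app. split; auto. constructor; auto. apply Nat.mod_upper_bound. lia.
Qed.

Lemma wval_enc (L X : nat) : (X < m ^ L)%nat -> wval (enc L X) = X.
Proof.
  revert X. induction L as [|L IH]; intros X HX; simpl.
  - simpl in HX. unfold wval. simpl. lia.
  - rewrite wval_app, IH.
    + rewrite wval_cons. unfold wval. simpl.
      pose proof (Nat.div_mod_eq X m). lia.
    + apply Nat.Div0.div_lt_upper_bound. simpl in HX. lia.
Qed.

Lemma powm_pos (n : nat) : 0 < INR m ^ n.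
Proof. apply pow_lt, lt_0_INR. lia. Qed.

Lemma partial_sum_Nn (K : nat) :
  sum_f_R0 (fun k => INR (d k) / INR m ^ S k) K = INR (Nn (S K)) / INR m ^ S K.
Proof.
  assert (Hm : INR m <> 0) by (apply not_0_INR; lia).
  induction K as [|K IH].
  - cbn [sum_f_R0 Nn pow]. rewrite Nat.mul_0_r, Nat.add_0_l. reflexivity.
  - assert (Hp : INR m ^ K <> 0) by (apply Rgt_not_eq, powm_pos).
    cbn [sum_f_R0]. rewrite IH.
    change (Nn (S (S K))) with (m * Nn (S K) + d (S K))%nat.
    rewrite plus_INR, mult_INR. cbn [pow]. field. auto.
Qed.

Variable u : R.
Hypothesis d_expands_u : madic_expansion m d u.

(* [Nn n] is the integer part of [m^n u], up to the endpoint ambiguity. *)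
Lemma tail_bounds (n : nat) : 0 <= INR m ^ n * u - INR (Nn n) <= 1.
Proof.
  assert (Hp := powm_pos n).
  assert (H : INR (Nn n) / INR m ^ n <= u <= (INR (Nn n) + 1) / INR m ^ n).
  { destruct d_expands_u as [_ Hs]. apply (infinite_sum_bounds _ u _ _ n Hs).
    intros K HK. rewrite partial_sum_Nn.
    set (j := (S K - n)%nat).
    destruct (Nn_window (proj1 d_expands_u) n j) as [H1 H2].
    replace (n + j)%nat with (S K) in H1, H2 by (unfold j; lia).
    apply le_INR in H1. apply lt_INR in H2.
    rewrite mult_INR, pow_INR in H1, H2. rewrite plus_INR in H2. change (INR 1) with 1 in H2.
    assert (Hq := powm_pos j).
    assert (E : INR m ^ S K = INR m ^ n * INR m ^ j)
      by (rewrite <- pow_add; f_equal; unfold j; lia).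
    rewrite E. split.
    - replace (INR (Nn n) / INR m ^ n)
        with (INR (Nn n) * INR m ^ j / (INR m ^ n * INR m ^ j)) by (field; lra).
      unfold Rdiv. apply Rmult_le_compat_r; [|lra].
      apply Rlt_le, Rinv_0_lt_compat, Rmult_lt_0_compat; auto.
    - replace ((INR (Nn n) + 1) / INR m ^ n)
        with ((INR (Nn n) + 1) * INR m ^ j / (INR m ^ n * INR m ^ j)) by (field; lra).
      unfold Rdiv. apply Rmult_le_compat_r; [|lra].
      apply Rlt_le, Rinv_0_lt_compat, Rmult_lt_0_compat; auto. }
  destruct H as [H1 H2].
  apply (Rmult_le_compat_l (INR m ^ n)) in H1, H2; try lra.
  replace (INR m ^ n * (INR (Nn n) / INR m ^ n)) with (INR (Nn n)) in H1 by (field; lra).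
  replace (INR m ^ n * ((INR (Nn n) + 1) / INR m ^ n)) with (INR (Nn n) + 1)
    in H2 by (field; lra).
  lra.
Qed.

Lemma tail_window (n : nat) (w : list nat) : prefix n w ->
  INR (wval w) / INR m ^ length w <= INR m ^ n * u - INR (Nn n)
  <= (INR (wval w) + 1) / INR m ^ length w.
Proof.
  intros Hp. pose proof (tail_bounds (n + length w)) as H.
  rewrite Nn_prefix, plus_INR, mult_INR, pow_INR, pow_add in H by auto.
  assert (Hq := powm_pos (length w)).
  split; apply (Rmult_le_reg_l (INR m ^ length w)); auto; field_simplify; lra.
Qed.

End Digits.

(* A deterministic automaton with transition map [advance] on words (which
   respects concatenation), and a property [lands s w] of "success right now
   from state [s], whatever follows the word [w]". *)
Section Synchronizing.

Variables (State : Type) (advance : State -> list nat -> State).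
Variables (valid : nat -> Prop) (lands : State -> list nat -> Prop).
Hypothesis advance_app :
  forall s w1 w2, advance s (w1 ++ w2) = advance (advance s w1) w2.
Hypothesis lands_app : forall s w w', lands s w -> lands s (w ++ w').

Definition handles (s : State) (w : list nat) : Prop :=
  exists w1 w2, w = w1 ++ w2 /\ lands (advance s w1) w2.

Lemma handles_app (s : State) (w w' : list nat) : handles s w -> handles s (w ++ w').
Proof.
  intros [w1 [w2 [-> H]]]. exists w1, (w2 ++ w'). split.
  - symmetry. apply app_assoc.
  - apply lands_app. exact H.
Qed.

Lemma handles_shift (s : State) (w1 w : list nat) :
  handles (advance s w1) w -> handles s (w1 ++ w).
Proof.
  intros [v1 [v2 [-> H]]]. exists (w1 ++ v1), v2. split.
  - apply app_assoc.
  - rewrite advance_app. exact H.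
Qed.

(* If every single state can be handled, then one word handles finitely many
   states at once: handle them one after the other, each from the state the
   previous part of the word has driven it to. *)
Lemma synchronizing_word (l : list State) :
  (forall s, exists w, Forall valid w /\ handles s w) ->
  exists w, Forall valid w /\ forall s, In s l -> handles s w.
Proof.
  intros Hone. induction l as [|s l IH].
  - exists nil. split; [constructor | intros s []].
  - destruct IH as [w [Hw Hl]].
    destruct (Hone (advance s w)) as [w' [Hw' Hs]].
    exists (w ++ w'). split; [apply Forall_app; auto|].
    intros s' [<- | Hin].
    + apply handles_shift. exact Hs.
    + apply handles_app, Hl, Hin.
Qed.

End Synchronizing.

Lemma cylinder_approx (m K : nat) (s0 : R) : (1 <= m)%nat -> 0 <= s0 < 1 ->
  exists Y, (Y < m ^ K)%nat /\ forall s,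
    INR Y / INR m ^ K <= s <= (INR Y + 1) / INR m ^ K -> Rabs (s - s0) <= / INR m ^ K.
Proof.
  intros Hm Hs0. assert (Hp := powm_pos m Hm K).
  destruct (base_Int_part (s0 * INR m ^ K)) as [H1 H2].
  assert (H0 : (0 <= Int_part (s0 * INR m ^ K))%Z).
  { assert (Hgt : IZR (-1) < IZR (Int_part (s0 * INR m ^ K))) by (simpl; nra).
    apply lt_IZR in Hgt. lia. }
  set (Y := Z.to_nat (Int_part (s0 * INR m ^ K))).
  assert (HY : INR Y = IZR (Int_part (s0 * INR m ^ K)))
    by (unfold Y; rewrite INR_IZR_INZ, Z2Nat.id; auto).
  assert (Hs0Y : INR Y <= s0 * INR m ^ K < INR Y + 1) by (rewrite HY; lra).
  exists Y. split.
  - apply INR_lt. rewrite pow_INR. nra.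
  - intros s [Hl Hu]. apply Rabs_le. split.
    + apply Rle_trans with (INR Y / INR m ^ K - s0); [|lra].
      apply (Rmult_le_reg_r (INR m ^ K)); auto. field_simplify; lra.
    + apply Rle_trans with ((INR Y + 1) / INR m ^ K - s0); [lra|].
      apply (Rmult_le_reg_r (INR m ^ K)); auto. field_simplify; lra.
Qed.

Lemma small_power (m : nat) (eps : R) : (2 <= m)%nat -> 0 < eps ->
  exists K, / INR m ^ K < eps.
Proof.
  intros Hm Heps.
  assert (Hm2 : 2 <= INR m) by (apply (le_INR 2); lia).
  destruct (pow_lt_1_zero (/ INR m)) with eps as [K HK]; auto.
  { rewrite Rabs_right; [|apply Rle_ge, Rlt_le, Rinv_0_lt_compat; lra].
    rewrite <- Rinv_1. apply Rinv_lt_contravar; lra. }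
  exists K. specialize (HK K (Nat.le_refl K)). rewrite pow_inv in HK.
  rewrite Rabs_right in HK; auto.
  apply Rle_ge, Rlt_le, Rinv_0_lt_compat, pow_lt. lra.
Qed.

Section Hitting.

Variables (m : nat) (p1 p2 q : Z) (a b : R).
Hypothesis m_ge2 : (2 <= m)%nat.
Hypothesis q_pos : (0 < q)%Z.
Hypothesis p2_nonzero : p2 <> 0%Z.
Hypotheses (a_nonneg : 0 <= a) (a_lt_b : a < b) (b_le1 : b <= 1).

Let m_pos : (1 <= m)%nat. Proof. lia. Qed.

(* Since [|p2| >= 1], the segment [c0 + p2 [0,q)] / q has length at least 1,
   so it meets every class modulo 1. *)
Lemma steer (c0 : Z) (v : R) : 0 <= v < 1 ->
  exists z, 0 <= z < IZR q /\ frac ((IZR c0 + IZR p2 * z) / IZR q) = v.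
Proof.
  intros Hv.
  assert (Hq : 1 <= IZR q) by (apply IZR_le; lia).
  set (t := IZR c0 / IZR q).
  destruct (Z_lt_le_dec 0 p2) as [Hp|Hp].
  - assert (Hp1 : 1 <= IZR p2) by (apply IZR_le; lia).
    pose proof (frac_bounds (v - t)) as Hf.
    exists (IZR q * frac (v - t) / IZR p2). split.
    + split; [apply Rmult_le_pos; [nra | apply Rlt_le, Rinv_0_lt_compat; lra]|].
      apply (Rmult_lt_reg_r (IZR p2)); [lra|]. field_simplify; nra.
    + replace ((IZR c0 + IZR p2 * (IZR q * frac (v - t) / IZR p2)) / IZR q)
        with (IZR (- Int_part (v - t)) + v)
        by (unfold frac, t; rewrite opp_IZR; field; lra).
      apply frac_small; auto.
  - assert (Hp1 : IZR p2 <= -1) by (apply IZR_le; lia).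
    pose proof (frac_bounds (t - v)) as Hf.
    exists (IZR q * frac (t - v) / - IZR p2). split.
    + split; [apply Rmult_le_pos; [nra | apply Rlt_le, Rinv_0_lt_compat; lra]|].
      apply (Rmult_lt_reg_r (- IZR p2)); [lra|]. field_simplify; nra.
    + replace ((IZR c0 + IZR p2 * (IZR q * frac (t - v) / - IZR p2)) / IZR q)
        with (IZR (Int_part (t - v)) + v)
        by (unfold frac, t; field; lra).
      apply frac_small; auto.
Qed.

(* The same, with the point split into an integer part [S < q], to be
   written as a numeral, and a fractional part [s0]. *)
Lemma steer_digits (c0 : Z) (v : R) : 0 <= v < 1 ->
  exists (S : nat) (s0 : R), (Z.of_nat S < q)%Z /\ 0 <= s0 < 1 /\
    frac ((IZR c0 + IZR p2 * (INR S + s0)) / IZR q) = v.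
Proof.
  intros Hv. destruct (steer c0 v Hv) as [z [Hz Hfz]].
  destruct (base_Int_part z) as [Hz1 Hz2].
  assert (HS0 : (0 <= Int_part z)%Z).
  { assert (Hgt : IZR (-1) < IZR (Int_part z)) by (simpl; lra). apply lt_IZR in Hgt. lia. }
  assert (HSq : (Int_part z < q)%Z) by (apply lt_IZR; lra).
  exists (Z.to_nat (Int_part z)), (frac z). split; [lia|]. split; [apply frac_bounds|].
  rewrite INR_IZR_INZ, Z2Nat.id by exact HS0. unfold frac.
  replace (IZR (Int_part z) + (z - IZR (Int_part z))) with z by ring. exact Hfz.
Qed.

Lemma fine_cylinder_error : exists K, forall h,
  Rabs h <= / INR m ^ K -> Rabs (IZR p2 * h / IZR q) < (b - a) / 2.
Proof.
  set (dl := (b - a) / 2).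
  assert (Hq : 1 <= IZR q) by (apply IZR_le; lia).
  assert (Hp2 : 1 <= IZR (Z.abs p2)) by (apply IZR_le; lia).
  destruct (small_power m (dl * IZR q / IZR (Z.abs p2))) as [K HK]; auto.
  { unfold dl. apply Rdiv_lt_0_compat; nra. }
  exists K. intros h Hh. assert (Hpow := powm_pos m m_pos K).
  unfold Rdiv. rewrite !Rabs_mult, Rabs_inv, (Rabs_right (IZR q)), <- abs_IZR by lra.
  apply Rle_lt_trans with (IZR (Z.abs p2) * / INR m ^ K * / IZR q).
  - apply Rmult_le_compat_r; [apply Rlt_le, Rinv_0_lt_compat; lra|].
    apply Rmult_le_compat_l; lra.
  - replace (IZR (Z.abs p2) * / INR m ^ K * / IZR q)
      with (/ INR m ^ K * (IZR (Z.abs p2) / IZR q)) by (field; lra).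
    replace dl with (dl * IZR q / IZR (Z.abs p2) * (IZR (Z.abs p2) / IZR q))
      by (field; lra).
    apply Rmult_lt_compat_r; [apply Rdiv_lt_0_compat|]; lra.
Qed.

Definition affine (u : R) : R := IZR p1 / IZR q + IZR p2 / IZR q * u.

Definition cong (x y : Z) : Prop := (q | x - y)%Z.

Lemma cong_mod_mul (x y c : Z) : cong (x * y + c) (x mod q * y + c).
Proof.
  exists (x / q * y)%Z. rewrite Z.mod_eq by lia. ring.
Qed.

(* Modulo [q], the relevant state at position [n] is [(m^n, Nn n)]; reading a
   word [w] multiplies both by [m^|w|] and appends the digits of [w] to the
   second component. *)
Definition advance (s : Z * Z) (w : list nat) : Z * Z :=
  (fst s * Z.of_nat (m ^ length w),
   snd s * Z.of_nat (m ^ length w) + Z.of_nat (wval m w))%Z.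

Lemma advance_app (s : Z * Z) (w1 w2 : list nat) :
  advance s (w1 ++ w2) = advance (advance s w1) w2.
Proof.
  destruct s as [e r]. unfold advance. simpl.
  rewrite length_app, wval_app, Nat.pow_add_r, !Nat2Z.inj_add, !Nat2Z.inj_mul.
  f_equal; ring.
Qed.

Definition lands (s : Z * Z) (w : list nat) : Prop :=
  forall d u n, madic_expansion m d u ->
    cong (Z.of_nat (m ^ n)) (fst s) -> cong (Z.of_nat (Nn m d n)) (snd s) ->
    prefix d n w -> a < frac (INR m ^ n * affine u) < b.

Lemma lands_app (s : Z * Z) (w w' : list nat) : lands s w -> lands s (w ++ w').
Proof.
  intros H d u n Hexp He Hr Hp. apply (H d u n Hexp He Hr).
  exact (prefix_app_l d n w w' Hp).
Qed.

Lemma frac_residue (d : nat -> nat) (u : R) (n : nat) (e r : Z) :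
  cong (Z.of_nat (m ^ n)) e -> cong (Z.of_nat (Nn m d n)) r ->
  frac (INR m ^ n * affine u)
  = frac ((IZR (p1 * e + p2 * r) + IZR p2 * (INR m ^ n * u - INR (Nn m d n))) / IZR q).
Proof.
  intros [k1 Hk1] [k2 Hk2].
  assert (Hq : IZR q <> 0) by (apply not_0_IZR; lia).
  assert (E1 : INR m ^ n = IZR e + IZR k1 * IZR q).
  { rewrite <- pow_INR, INR_IZR_INZ, <- mult_IZR, <- plus_IZR. f_equal. lia. }
  assert (E2 : INR (Nn m d n) = IZR r + IZR k2 * IZR q).
  { rewrite INR_IZR_INZ, <- mult_IZR, <- plus_IZR. f_equal. lia. }
  rewrite <- (frac_shift _ (- (p1 * k1 + p2 * k2))). f_equal.
  unfold affine. rewrite E2, E1, opp_IZR, !plus_IZR, !mult_IZR. field. exact Hq.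
Qed.

(* From any state, a suitable word first fixes the residue of the integer part
   (a numeral of [Z.to_nat q] digits) and then the position of the tail
   (a fine cylinder), so that the orbit lands in the middle of the hole. *)
Lemma lands_from_any_state (s : Z * Z) :
  exists w1 w2, Forall (fun k => k < m)%nat (w1 ++ w2) /\ lands (advance s w1) w2.
Proof.
  destruct s as [e r].
  set (qn := Z.to_nat q).
  assert (Hqn : (qn < m ^ qn)%nat) by (apply Nat.pow_gt_lin_r; lia).
  set (M := Z.of_nat (m ^ qn)).
  set (c0 := (p1 * e * M + p2 * r * M)%Z).
  set (v := (a + b) / 2).
  assert (Hq : 1 <= IZR q) by (apply IZR_le; lia).
  destruct (steer_digits c0 v) as [S [s0 [HSq [Hs0 Hfz]]]]; [unfold v; lra|].
  assert (HSM : (S < m ^ qn)%nat) by (apply Nat.lt_trans with qn; [unfold qn; lia | exact Hqn]).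
  destruct fine_cylinder_error as [K HK].
  destruct (cylinder_approx m K s0 m_pos Hs0) as [Y [HY Happrox]].
  exists (enc m qn S), (enc m K Y). split.
  { apply Forall_app. split; apply enc_digits; lia. }
  intros d u n Hexp He Hr Hp. unfold advance in He, Hr. simpl in He, Hr.
  rewrite enc_length in He, Hr. rewrite wval_enc in Hr by auto. fold M in He, Hr.
  rewrite (frac_residue d u n _ _ He Hr).
  pose proof (tail_window m d m_pos u Hexp n (enc m K Y) Hp) as Hw.
  rewrite enc_length, wval_enc in Hw by auto.
  set (sn := INR m ^ n * u - INR (Nn m d n)) in *.
  assert (Ec : (p1 * (e * M) + p2 * (r * M + Z.of_nat S) = c0 + p2 * Z.of_nat S)%Z)
    by (unfold c0; ring).
  rewrite Ec, plus_IZR, mult_IZR, <- INR_IZR_INZ.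
  replace ((IZR c0 + IZR p2 * INR S + IZR p2 * sn) / IZR q)
    with ((IZR c0 + IZR p2 * (INR S + s0)) / IZR q + IZR p2 * (sn - s0) / IZR q)
    by (field; lra).
  replace a with (v - (b - a) / 2) by (unfold v; lra).
  replace b with (v + (b - a) / 2) at 2 by (unfold v; lra).
  apply frac_stable; [exact Hfz | apply HK, Happrox, Hw | unfold v; lra | unfold v; lra].
Qed.

Lemma handles_any_state (s : Z * Z) :
  exists w, Forall (fun k => k < m)%nat w /\ handles (Z * Z) advance lands s w.
Proof.
  destruct (lands_from_any_state s) as [w1 [w2 [Hw Hl]]].
  exists (w1 ++ w2). split; auto. exists w1, w2. auto.
Qed.

Definition residues : list Z := map Z.of_nat (seq 0 (Z.to_nat q)).

Lemma mod_in_residues (x : Z) : In (x mod q)%Z residues.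
Proof.
  pose proof (Z.mod_pos_bound x q q_pos).
  unfold residues. apply in_map_iff. exists (Z.to_nat (x mod q)). split.
  - apply Z2Nat.id. lia.
  - apply in_seq. lia.
Qed.

(* Reading the
   synchronizing word for all residue states, which occurs in the digits of
   [u], steers the orbit into the hole whatever the state was. *)
Lemma orbit_hits_hole (d : nat -> nat) (u : R) :
  madic_expansion m d u -> universal_seq m d ->
  exists n, a < frac (INR m ^ n * affine u) < b.
Proof.
  intros Hexp Huniv.
  destruct (synchronizing_word (Z * Z) advance (fun k => k < m)%nat lands
              advance_app lands_app (list_prod residues residues) handles_any_state)
    as [w [Hw Hall]].
  destruct (Huniv (w ++ 0%nat :: nil)) as [k0 Hk0].
  { rewrite length_app. simpl. lia. }
  { apply Forall_app. split; [exact Hw | constructor; [lia | constructor]]. }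
  set (s0 := (Z.of_nat (m ^ k0) mod q, Z.of_nat (Nn m d k0) mod q)%Z).
  assert (Hs0 : In s0 (list_prod residues residues))
    by (apply in_prod; apply mod_in_residues).
  destruct (handles_app _ _ _ lands_app s0 w (0%nat :: nil) (Hall s0 Hs0))
    as [w1 [w2 [Hsplit Hl]]].
  assert (Hp : prefix d k0 (w1 ++ w2)) by (rewrite <- Hsplit; exact Hk0).
  exists (k0 + length w1)%nat. apply (Hl d u _ Hexp); simpl.
  - rewrite Nat.pow_add_r, Nat2Z.inj_mul, <- (Z.add_0_r (_ * _)).
    rewrite <- (Z.add_0_r (_ mod q * _)). apply cong_mod_mul.
  - rewrite (Nn_prefix m d k0 w1 (prefix_app_l d k0 w1 w2 Hp)).
    rewrite Nat2Z.inj_add, Nat2Z.inj_mul. apply cong_mod_mul.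
  - exact (prefix_app_r d k0 w1 w2 Hp).
Qed.

End Hitting.

Lemma rational_IZR (k : Z) : rational (IZR k).
Proof. exists k, 1%Z. split; [lia | field]. Qed.

Lemma rational_pos_den (r : R) : rational r -> exists p q, (0 < q)%Z /\ r = IZR p / IZR q.
Proof.
  intros [p [q [Hq E]]]. destruct (Z_lt_le_dec 0 q) as [H|H].
  - exists p, q. auto.
  - exists (- p)%Z, (- q)%Z. split; [lia|]. rewrite E, !opp_IZR. field.
    apply not_0_IZR. exact Hq.
Qed.

(* A survivor never lies on a non-horizontal rational line through a point
   with a universal expansion: otherwise its orbit would enter the hole. *)
Lemma survivor_off_rational_lines (m : nat) (a b x u r1 r2 : R) :
  (2 <= m)%nat -> 0 <= a -> a < b -> b <= 1 ->
  survivor m a b x -> has_universal_expansion m u ->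
  rational r1 -> rational r2 -> r2 <> 0 -> x <> r1 + r2 * u.
Proof.
  intros Hm Ha Hab Hb [Hx Hsurv] [d [Hexp Huniv]] H1 H2 Hr2 Ex.
  destruct (rational_pos_den r1 H1) as [p1 [q1 [Hq1 E1]]].
  destruct (rational_pos_den r2 H2) as [p2 [q2 [Hq2 E2]]].
  assert (Hp2 : p2 <> 0%Z) by (intros ->; apply Hr2; rewrite E2; unfold Rdiv; ring).
  destruct (orbit_hits_hole m (p1 * q2) (p2 * q1) (q1 * q2) a b Hm
              ltac:(lia) ltac:(lia) Ha Hab Hb d u Hexp Huniv) as [n Hn].
  apply (Hsurv n). rewrite iter_Tmap by exact Hx.
  replace x with (affine (p1 * q2) (p2 * q1) (q1 * q2) u); [exact Hn|].
  assert (IZR q1 <> 0) by (apply not_0_IZR; lia).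
  assert (IZR q2 <> 0) by (apply not_0_IZR; lia).
  rewrite Ex, E1, E2. unfold affine. rewrite !mult_IZR. field. auto.
Qed.

Theorem corollary2 (m : nat) (a b : R) :
  (2 <= m)%nat -> 0 <= a -> a < b -> b <= 1 ->
  (forall t : R, 0 < t < 1 -> has_universal_expansion m t ->
     forall x : R, survivor m a b x ->
       irrational (x - t) /\ irrational (x + t) /\ (x <> 0 -> irrational (x / t))) /\
  (forall t : R, 1 < t -> has_universal_expansion m (/ t) ->
     forall x : R, survivor m a b x -> x <> 0 -> irrational (t * x)).
Proof.
  intros Hm Ha Hab Hb.
  pose proof (survivor_off_rational_lines m a b) as Hoff.
  split.
  - intros t Ht Hu x Hx. split; [|split].
    + intros Hr. apply (Hoff x t (x - t) 1 Hm Ha Hab Hb Hx Hu Hr (rational_IZR 1)); lra.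
    + intros Hr. apply (Hoff x t (x + t) (-1) Hm Ha Hab Hb Hx Hu Hr (rational_IZR (-1))); lra.
    + intros Hx0 Hr.
      apply (Hoff x t 0 (x / t) Hm Ha Hab Hb Hx Hu (rational_IZR 0) Hr).
      * intros H0. apply Hx0. replace x with (x / t * t) by (field; lra). rewrite H0. ring.
      * field. lra.
  - intros t Ht Hu x Hx Hx0 Hr.
    apply (Hoff x (/ t) 0 (t * x) Hm Ha Hab Hb Hx Hu (rational_IZR 0) Hr).
    + intros H0. apply Rmult_integral in H0 as [H0|H0]; lra.
    + field. lra.
Qed.
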